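(* Let $V=\{1,\#_p,\#_c,0\}$ and consider the truth-relation $\models_{\{1,\#_p\},\{1,\#_c\}}$. For every $n$ and every pair $(\mathcal{B}^p,\mathcal{B}^c)$ of premise/conclusion regularity rules for an $n$-ary connective, there is a unique truth function $f:V^n\to V$ satisfying this regularity rule at the level of truth values, i.e. such that for all $\gamma,\delta\subseteq V$ and $x_1,\dots,x_n\in V$: $\gamma\cup\{f(\vec x)\}\models\delta$ iff for all $(B_p,B_c)\in\mathcal{B}^p$, $\gamma\cup\{x_i:i\in B_p\}\models\{x_i:i\in B_c\}\cup\delta$; and $\gamma\models\{f(\vec x)\}\cup\delta$ iff for all $(B_p,B_c)\in\mathcal{B}^c$, $\gamma\cup\{x_i:i\in B_p\}\models\{x_i:i\in B_c\}\cup\delta$.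
   Context: Here $\models_{\mathcal{D}_p,\mathcal{D}_c}$ denotes the relation on $\mathcal{P}(V)\times\mathcal{P}(V)$: $\gamma\models_{\mathcal{D}_p,\mathcal{D}_c}\delta$ iff ($\gamma\subseteq\mathcal{D}_p\Rightarrow\delta\cap\mathcal{D}_c\neq\emptyset$). A regularity rule for an $n$-ary connective is a pair $\mathcal{B}^p,\mathcal{B}^c\subseteq\mathcal{P}(\{1,\dots,n\})\times\mathcal{P}(\{1,\dots,n\})$. Empty conjunctions count as true. *)

From HB Require Import structures.
From mathcomp Require Import all_boot.
Set Implicit Arguments. Unset Strict Implicit. Unset Printing Implicit Defensive.

Inductive tv := T1 | Tp | Tc | T0.

Definition tv_code (x : tv) : 'I_4 :=
  match x with T1 => inord 0 | Tp => inord 1 | Tc => inord 2 | T0 => inord 3 end.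
Definition tv_decode (i : 'I_4) : tv :=
  match val i with 0 => T1 | 1 => Tp | 2 => Tc | _ => T0 end.
Lemma tv_codeK : cancel tv_code tv_decode.
Proof. by case; rewrite /tv_decode /= inordK. Qed.
HB.instance Definition _ := Equality.copy tv (can_type tv_codeK).
HB.instance Definition _ := Finite.copy tv (can_type tv_codeK).

Definition Dp : {set tv} := [set T1; Tp].
Definition Dc : {set tv} := [set T1; Tc].

Definition models (gamma delta : {set tv}) : Prop :=
  gamma \subset Dp -> delta :&: Dc != set0.

Definition rule (n : nat) := {set {set 'I_n} * {set 'I_n}}.

Definition vals n (x : {ffun 'I_n -> tv}) (B : {set 'I_n}) : {set tv} := x @: B.

Definition satisfies_rules n (Bp Bc : rule n) (f : {ffun {ffun 'I_n -> tv} -> tv}) : Prop :=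
  forall (gamma delta : {set tv}) (x : {ffun 'I_n -> tv}),
    (models (f x |: gamma) delta <->
       (forall B, B \in Bp -> models (gamma :|: vals x B.1) (vals x B.2 :|: delta)))
    /\
    (models gamma (f x |: delta) <->
       (forall B, B \in Bc -> models (gamma :|: vals x B.1) (vals x B.2 :|: delta))).

From mathcomp Require Import all_boot.
From Corelib Require Import Setoid.

(* [gamma |= delta] says "gamma is not all premise-designated, or delta meets
   Dc", so it turns unions on either side into a disjunction.  Taking
   gamma = delta = {} in the two clauses of a regularity rule, a truth
   function f must satisfy: f x is not premise-designated iff every instance
   of Bp holds at x, and f x is conclusion-designated iff every instance of
   Bc holds at x; conversely these two conditions give both clauses for all
   gamma, delta.  The four values are exactly the four combinations of
   membership in Dp and Dc, so f x is determined and always exists. *)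

Definition modelsb (gamma delta : {set tv}) : bool :=
  (gamma \subset Dp) ==> (delta :&: Dc != set0).

Lemma modelsP gamma delta : reflect (models gamma delta) (modelsb gamma delta).
Proof. exact: implyP. Qed.

Lemma modelsbU gamma1 gamma2 delta1 delta2 :
  modelsb (gamma1 :|: gamma2) (delta1 :|: delta2)
  = modelsb gamma1 delta1 || modelsb gamma2 delta2.
Proof.
rewrite /modelsb subUset setIUl setU_eq0 !implybE negb_and negb_and.
by rewrite orbACA orbC.
Qed.

Lemma modelsb00 : modelsb set0 set0 = false.
Proof. by rewrite /modelsb sub0set set0I eqxx. Qed.

Lemma modelsb1l v : modelsb [set v] set0 = (v \notin Dp).
Proof. by rewrite /modelsb sub1set set0I eqxx implybF. Qed.

Lemma modelsb1r v : modelsb set0 [set v] = (v \in Dc).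
Proof.
rewrite /modelsb sub0set /=; apply/set0Pn/idP => [[w] | vDc].
  by rewrite inE => /andP[/set1P-> ->].
by exists v; rewrite inE set11.
Qed.

Lemma models_premise v gamma delta :
  models (v |: gamma) delta <-> (v \notin Dp) || modelsb gamma delta.
Proof.
apply: (iff_trans (rwP (modelsP _ _))).
by rewrite -{1}[delta]set0U modelsbU modelsb1l.
Qed.

Lemma models_conclusion v gamma delta :
  models gamma (v |: delta) <-> (v \in Dc) || modelsb gamma delta.
Proof.
apply: (iff_trans (rwP (modelsP _ _))).
by rewrite -{1}[gamma]set0U modelsbU modelsb1r.
Qed.

Definition rule_holds {n} (R : rule n) (x : {ffun 'I_n -> tv}) : bool :=
  [forall B in R, modelsb (vals x B.1) (vals x B.2)].

Lemma models_rule n (R : rule n) gamma delta x :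
  (forall B, B \in R -> models (gamma :|: vals x B.1) (vals x B.2 :|: delta))
  <-> rule_holds R x || modelsb gamma delta.
Proof.
have modelsB B : models (gamma :|: vals x B.1) (vals x B.2 :|: delta)
                 <-> modelsb (vals x B.1) (vals x B.2) || modelsb gamma delta.
  by apply: (iff_trans (rwP (modelsP _ _))); rewrite setUC modelsbU orbC.
case: (modelsb gamma delta) modelsB => modelsB; rewrite ?orbT ?orbF.
  by split=> // _ B _; apply/modelsB; rewrite orbT.
split=> [HR | /forall_inP HR B /HR h]; last by apply/modelsB; rewrite h.
by apply/forall_inP => B /HR /modelsB; rewrite orbF.
Qed.

Lemma satisfies_rulesP n (Bp Bc : rule n) f :
  satisfies_rules Bp Bc f <->
  forall x, (f x \notin Dp) = rule_holds Bp x /\ (f x \in Dc) = rule_holds Bc x.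
Proof.
split=> [Hf x | Hf gamma delta x].
  have [] := Hf set0 set0 x.
  rewrite models_premise models_conclusion !models_rule modelsb00 !orbF.
  by move=> [? ?] [? ?]; split; apply/idP/idP.
rewrite (models_premise (f x)) (models_conclusion (f x)) !models_rule.
by have [-> ->] := Hf x.
Qed.

(* [tv_code] goes through [inord], whose equality test does not compute. *)
Lemma tv_eqE (x y : tv) : (x == y) = (val (tv_code x) == val (tv_code y)).
Proof. by []. Qed.

Definition tv_of_designation (notDp inDc : bool) : tv :=
  match notDp, inDc with
  | false, true => T1 | false, false => Tp | true, true => Tc | true, false => T0
  end.

Lemma tv_of_designationK v : tv_of_designation (v \notin Dp) (v \in Dc) = v.
Proof. by case: v; rewrite !inE !tv_eqE /= !inordK. Qed.

Lemma tv_of_designation_notDp a b : (tv_of_designation a b \notin Dp) = a.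
Proof. by case: a; case: b; rewrite !inE !tv_eqE /= !inordK. Qed.

Lemma tv_of_designation_Dc a b : (tv_of_designation a b \in Dc) = b.
Proof. by case: a; case: b; rewrite !inE !tv_eqE /= !inordK. Qed.

Theorem theorem3p22 : forall (n : nat) (Bp Bc : rule n),
  exists! f : {ffun {ffun 'I_n -> tv} -> tv}, satisfies_rules Bp Bc f.
Proof.
move=> n Bp Bc.
exists [ffun x => tv_of_designation (rule_holds Bp x) (rule_holds Bc x)]; split.
  apply/satisfies_rulesP => x.
  by rewrite ffunE tv_of_designation_notDp tv_of_designation_Dc.
move=> f /satisfies_rulesP Hf; apply/ffunP => x; rewrite ffunE.
by have [<- <-] := Hf x; rewrite tv_of_designationK.
Qed.
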